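(* Let $(\delta_t)_{t\ge1}$ be a sequence of nonnegative reals, let $\kappa>0$, $\omega\ge0$, $\sigma>0$ and $\epsilon_t=\sigma/t^2$. If $$\delta_{t+1}\le\delta_t-\kappa\delta_t^2+\omega\epsilon_t\quad\text{for all }t\ge1,$$ then for all $t\ge1$, $\delta_t\le C/t$, where $$C:=\frac{4}{\kappa}\Big(1+\sqrt{2\omega\sigma\kappa(\omega\sigma\kappa+1)}\Big)+4\max\Big\{\delta_1,\frac{4}{\kappa}\Big\}.$$ *)

From Stdlib Require Import Reals.
Open Scope R_scope.

Definition lemma11_C (kappa omega sigma delta1 : R) : R :=
  4 / kappa * (1 + sqrt (2 * omega * sigma * kappa * (omega * sigma * kappa + 1)))
  + 4 * Rmax delta1 (4 / kappa).

(** Rescaling by [kappa] reduces the recursion to [u_(t+1) <= u_t - u_t^2 + A/t^2]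
    with [u_t = kappa delta_t] and [A = omega sigma kappa], and the claim to
    [u_t <= y/t] with [y = kappa C].  This follows by induction on [t] as soon as
    [u_1 <= y] and [1 + 4A <= y]: the map [x |-> x - x^2] is at most [1/4] and is
    increasing on [[0, 1/2]], so for [t >= 2y] the induction hypothesis can be
    pushed through it, while for [t < 2y] the bound [1/4] is already below [y/(t+1)]. *)

From Stdlib Require Import Reals Lra Psatz.
Open Scope R_scope.

Lemma sub_sqr_le_quarter (x : R) : x - x ^ 2 <= 1 / 4.
Proof. pose proof (pow2_ge_0 (x - 1 / 2)). nra. Qed.

Lemma sub_sqr_le_half (x z : R) : 0 <= x <= z -> z <= 1 / 2 -> x - x ^ 2 <= z - z ^ 2.
Proof. intros Hxz Hz. nra. Qed.

Section QuadraticDescent.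

Variables A y : R.
Hypothesis A_ge0 : 0 <= A.
Hypothesis y_large : 1 + 4 * A <= y.

Lemma quadratic_descent_late (t : R) :
  2 * y <= t -> y / t - (y / t) ^ 2 + A / t ^ 2 <= y / (t + 1).
Proof.
  intros Ht.
  assert (Hy : y + A <= y ^ 2) by nra.
  assert (Hdiff : y / (t + 1) - (y / t - (y / t) ^ 2 + A / t ^ 2)
                  = ((y ^ 2 - A) * (t + 1) - y * t) / (t ^ 2 * (t + 1)))
    by (field; lra).
  assert (0 <= ((y ^ 2 - A) * (t + 1) - y * t) / (t ^ 2 * (t + 1))).
  { apply Rle_mult_inv_pos; nra. }
  lra.
Qed.

Lemma quadratic_descent_early (t : R) :
  1 <= t -> t < 2 * y -> 1 / 4 + A / t ^ 2 <= y / (t + 1).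
Proof.
  intros Ht1 Ht.
  assert (Hdiff : y / (t + 1) - (1 / 4 + A / t ^ 2)
                  = (4 * y * t ^ 2 - t ^ 2 * (t + 1) - 4 * A * (t + 1))
                    / (4 * t ^ 2 * (t + 1)))
    by (field; lra).
  assert (0 <= (4 * y * t ^ 2 - t ^ 2 * (t + 1) - 4 * A * (t + 1))
               / (4 * t ^ 2 * (t + 1))).
  { apply Rle_mult_inv_pos; [|nra].
    assert (t ^ 2 * (t + 1) <= t ^ 2 * (2 * y + 1))
      by (apply Rmult_le_compat_l; nra).
    assert (A * (t + 1) <= A * (2 * t ^ 2)) by (apply Rmult_le_compat_l; nra).
    assert (0 <= t ^ 2 * (2 * y - 1 - 8 * A)) by (apply Rmult_le_pos; nra).
    nra. }
  lra.
Qed.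

Lemma quadratic_descent_step (t u u' : R) :
  1 <= t -> 0 <= u <= y / t -> u' <= u - u ^ 2 + A / t ^ 2 -> u' <= y / (t + 1).
Proof.
  intros Ht Hu Hu'.
  destruct (Rle_lt_dec (2 * y) t) as [Hlate | Hearly].
  - assert (y / t <= 1 / 2).
    { apply Rmult_le_reg_l with (2 * t); [lra|].
      replace (2 * t * (y / t)) with (2 * y) by (field; lra). lra. }
    pose proof (sub_sqr_le_half u (y / t) Hu ltac:(assumption)).
    pose proof (quadratic_descent_late t Hlate).
    lra.
  - pose proof (sub_sqr_le_quarter u).
    pose proof (quadratic_descent_early t Ht Hearly).
    lra.
Qed.

Theorem quadratic_descent (u : nat -> R) :
  (forall t, (1 <= t)%nat -> 0 <= u t) ->
  (forall t, (1 <= t)%nat -> u (S t) <= u t - u t ^ 2 + A / INR t ^ 2) ->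
  u 1%nat <= y ->
  forall t, (1 <= t)%nat -> u t <= y / INR t.
Proof.
  intros Hpos Hrec Hu1 t Ht.
  induction t as [|t IH]; [lia|].
  destruct (Nat.eq_dec t 0) as [-> | Ht0].
  - simpl INR. rewrite Rdiv_1_r. exact Hu1.
  - assert (Ht1 : (1 <= t)%nat) by lia.
    rewrite S_INR.
    apply (quadratic_descent_step (INR t) (u t)).
    + apply (le_INR 1). exact Ht1.
    + split; [apply Hpos|apply IH]; exact Ht1.
    + apply Hrec. exact Ht1.
Qed.

End QuadraticDescent.

Lemma le_sqrt_2_mul_succ (a : R) : 0 <= a -> a <= sqrt (2 * a * (a + 1)).
Proof.
  intros Ha.
  rewrite <- (sqrt_square a) at 1 by exact Ha.
  apply sqrt_le_1_alt. nra.
Qed.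

Section ConstantC.

Variables kappa omega sigma delta1 : R.
Hypothesis kappa_gt0 : 0 < kappa.
Hypothesis omega_ge0 : 0 <= omega.
Hypothesis sigma_ge0 : 0 <= sigma.
Hypothesis delta1_ge0 : 0 <= delta1.

Let C := lemma11_C kappa omega sigma delta1.

Lemma kappa_mul_lemma11_C :
  kappa * C = 4 * (1 + sqrt (2 * (omega * sigma * kappa) * (omega * sigma * kappa + 1)))
              + 4 * (kappa * Rmax delta1 (4 / kappa)).
Proof.
  unfold C, lemma11_C.
  replace (2 * omega * sigma * kappa) with (2 * (omega * sigma * kappa)) by ring.
  field. lra.
Qed.

Lemma kappa_mul_lemma11_C_ge : 1 + 4 * (omega * sigma * kappa) <= kappa * C.
Proof.
  rewrite kappa_mul_lemma11_C.
  assert (0 <= omega * sigma * kappa) by (apply Rmult_le_pos; [apply Rmult_le_pos|]; lra).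
  pose proof (le_sqrt_2_mul_succ (omega * sigma * kappa) ltac:(assumption)).
  assert (kappa * (4 / kappa) <= kappa * Rmax delta1 (4 / kappa))
    by (apply Rmult_le_compat_l; [lra | apply Rmax_r]).
  replace (kappa * (4 / kappa)) with 4 in * by (field; lra).
  lra.
Qed.

Lemma delta1_le_lemma11_C : delta1 <= C.
Proof.
  apply Rmult_le_reg_l with kappa; [exact kappa_gt0|].
  rewrite kappa_mul_lemma11_C.
  pose proof (sqrt_pos (2 * (omega * sigma * kappa) * (omega * sigma * kappa + 1))).
  assert (kappa * delta1 <= kappa * Rmax delta1 (4 / kappa))
    by (apply Rmult_le_compat_l; [lra | apply Rmax_l]).
  assert (0 <= kappa * delta1) by (apply Rmult_le_pos; lra).
  lra.
Qed.

End ConstantC.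

Theorem lemma11 (delta : nat -> R) (kappa omega sigma : R)
  (hdelta : forall t : nat, (1 <= t)%nat -> 0 <= delta t)
  (hkappa : 0 < kappa) (homega : 0 <= omega) (hsigma : 0 < sigma)
  (hrec : forall t : nat, (1 <= t)%nat ->
     delta (S t) <= delta t - kappa * (delta t) ^ 2 + omega * (sigma / (INR t) ^ 2)) :
  forall t : nat, (1 <= t)%nat ->
    delta t <= lemma11_C kappa omega sigma (delta 1%nat) / INR t.
Proof.
  intros t Ht.
  set (C := lemma11_C kappa omega sigma (delta 1%nat)).
  assert (Hd1 : 0 <= delta 1%nat) by (apply hdelta; lia).
  assert (Hscaled : kappa * delta t <= kappa * C / INR t).
  { assert (HA : 0 <= omega * sigma * kappa)
      by (apply Rmult_le_pos; [apply Rmult_le_pos|]; lra).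
    assert (HC : 1 + 4 * (omega * sigma * kappa) <= kappa * C)
      by (apply kappa_mul_lemma11_C_ge; lra).
    apply (quadratic_descent _ _ HA HC (fun n => kappa * delta n)); [| | | exact Ht].
    - intros n Hn. apply Rmult_le_pos; [lra | apply hdelta, Hn].
    - intros n Hn.
      assert (0 < INR n) by (apply lt_0_INR; lia).
      replace (kappa * delta n - (kappa * delta n) ^ 2 + omega * sigma * kappa / INR n ^ 2)
        with (kappa * (delta n - kappa * delta n ^ 2 + omega * (sigma / INR n ^ 2)))
        by (field; lra).
      apply Rmult_le_compat_l; [lra | apply hrec, Hn].
    - apply Rmult_le_compat_l; [lra | apply delta1_le_lemma11_C; lra]. }
  apply Rmult_le_reg_l with kappa; [exact hkappa|].
  replace (kappa * (C / INR t)) with (kappa * C / INR t) by (unfold Rdiv; ring).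
  exact Hscaled.
Qed.
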